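(* Let $t$ be a $\mu$-term over the finite alphabet $X$ and let $(x_n,y_n)_n$ be a factorization sequence for $t$. Then each of the sequences $(x_n)_n$ and $(y_n)_n$ has a subsequence converging in $(\overline{\Omega}_X\mathsf S)^1$ to the value in $\overline{\Omega}_X\mathsf S$ of a $\mu$-term (the empty term being allowed), i.e. to a $\mu$-word over $\mathsf S$.
   Context: $X$ is a finite alphabet, $\mathsf S$ is the pseudovariety of all finite semigroups and $\overline{\Omega}_X\mathsf S$ is the free profinite semigroup on $X$; $(\overline{\Omega}_X\mathsf S)^1$ is it with an identity adjoined (the empty word). $\widehat{\mathbb N}$ is the profinite completion of $(\mathbb N,+)$, and for $\alpha\in\widehat{\mathbb N}$ the $\alpha$-power $x\mapsto x^\alpha$ is the usual continuous unary operation on profinite semigroups. $\mu$ denotes the implicit signature consisting of binary multiplication together with all unary operations $x\mapsto x^\alpha$ with $\alpha\in\widehat{\mathbb N}\setminus\mathbb N$. A $\mu$-term is an element of the free algebra on $X$ in this signature with associative multiplication (the empty term is allowed); its value in $\overline{\Omega}_X\mathsf S$ is denoted $[t]_{\mathsf S}$, and a $\mu$-word over $\mathsf S$ is such a value. For each $\alpha\in\widehat{\mathbb N}$ a sequence $(\mathrm{Approx}_n(\alpha))_n$ of natural numbers converging to $\alpha$ is fixed, constant if $\alpha$ is finite and strictly increasing otherwise. For a $\mu$-term $t$, $\mathrm{Approx}_n(t)$ is the finite word obtained by recursively replacing each subterm $v^\alpha$ ($\alpha$ infinite) by $v^{\mathrm{Approx}_n(\alpha)}$. A factorization sequence for $t$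 is a sequence $(x_n,y_n)_n$ with $x_n\in X^*$, $y_n\in X^+$ and $x_ny_n=\mathrm{Approx}_n(t)$ for all $n$. *)

From mathcomp Require Import all_boot.
Set Implicit Arguments. Unset Strict Implicit. Unset Printing Implicit Defensive.

Record fsemigroup := FSemigroup {
  fs_car :> finType;
  fs_op : fs_car -> fs_car -> fs_car;
  fs_assoc : associative fs_op }.

Record fmonoid := FMonoid {
  fm_car :> finType;
  fm_op : fm_car -> fm_car -> fm_car;
  fm_one : fm_car;
  fm_assoc : associative fm_op;
  fm_mul1 : left_id fm_one fm_op;
  fm_mulr1 : right_id fm_one fm_op }.

Definition shom (S T : fsemigroup) (h : S -> T) :=
  forall a b, h (fs_op a b) = fs_op (h a) (h b).
Definition mhom (M N : fmonoid) (h : M -> N) :=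
  h (fm_one M) = fm_one N /\ forall a b, h (fm_op a b) = fm_op (h a) (h b).

Fixpoint mpow (M : fmonoid) (g : M) (k : nat) : M :=
  if k is k'.+1 then fm_op g (mpow g k') else fm_one M.

(** * The profinite completion \hat N of (N,+):
    the projective limit of all finite images of (N,+), i.e. the families
    (a(M,g))_{M finite monoid, g in M} (g = image of 1) that are natural w.r.t.
    monoid homomorphisms. *)
Definition Nhat := { a : forall M : fmonoid, M -> M |
  forall (M N : fmonoid) (h : M -> N), mhom h -> forall g, h (a M g) = a N (h g) }.

Definition Nfinite (al : Nhat) := exists k : nat,
  forall (M : fmonoid) (g : M), sval al M g = mpow g k.

Definition Ninf := { al : Nhat | ~ Nfinite al }.

(** convergence in \hat N (projective-limit topology) of a sequence of naturals *)
Definition nat_conv (a : nat -> nat) (al : Nhat) : Prop :=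
  forall (M : fmonoid) (g : M), exists N, forall n, N <= n -> mpow g (a n) = sval al M g.

Definition approx_ok (A : Nhat -> nat -> nat) : Prop :=
  (forall al, nat_conv (A al) al) /\
  (forall al, Nfinite al -> forall n, A al n = A al 0) /\
  (forall al, ~ Nfinite al -> forall n, A al n < A al n.+1).

(** * The free profinite semigroup over X, as the projective limit of the
    X-generated finite semigroups: families (u(S,f))_{S finite, f : X -> S}
    natural w.r.t. semigroup homomorphisms. *)
Definition Omega (X : finType) := { u : forall S : fsemigroup, (X -> S) -> S |
  forall (S T : fsemigroup) (h : S -> T), shom h -> forall f, h (u S f) = u T (h \o f) }.

(** (Omega X)^1 : None is the adjoined identity (empty word). *)
Definition Omega1 (X : finType) := option (Omega X).

(** topology of (Omega X)^1 : the identity is isolated, Omega X has the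
    projective-limit (pointwise) topology. *)
Definition conv1 (X : finType) (v : nat -> Omega1 X) (u : Omega1 X) : Prop :=
  match u with
  | None => exists N, forall n, N <= n -> v n = None
  | Some u => (exists N, forall n, N <= n -> v n <> None) /\
      forall (S : fsemigroup) (f : X -> S), exists N, forall n, N <= n ->
        exists w, v n = Some w /\ sval w S f = sval u S f
  end.

Definition omul (S : fsemigroup) (a b : option S) : option S :=
  match a, b with
  | Some x, Some y => Some (fs_op x y)
  | None, _ => b
  | _, None => a
  end.

Lemma omulA (S : fsemigroup) : associative (@omul S).
Proof. by case=> [x|] [y|] [z|] //=; rewrite fs_assoc. Qed.
Lemma omul1 (S : fsemigroup) : left_id None (@omul S).
Proof. by case. Qed.
Lemma omulr1 (S : fsemigroup) : right_id None (@omul S).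
Proof. by case. Qed.

Definition S1 (S : fsemigroup) : fmonoid :=
  @FMonoid (option S) (@omul S) None (@omulA S) (@omul1 S) (@omulr1 S).

Lemma omap_mhom (S T : fsemigroup) (h : S -> T) :
  shom h -> @mhom (S1 S) (S1 T) (omap h).
Proof. move=> hh; split=> // [[a|] [b|]] //=; by rewrite hh. Qed.

(** * mu-terms.  Multiplication is a binary tree (values and approximations
    do not depend on bracketing); MOne is the empty term. *)
Inductive muterm (X : Type) :=
| MVar of X
| MOne
| MMul of muterm X & muterm X
| MPow of muterm X & Ninf.
Arguments MOne {X}.

(** value of a term in S^1 under an assignment X -> S; x^alpha is the
    usual alpha-power, i.e. alpha evaluated at the finite monoid S^1 *)
Fixpoint mueval (X : Type) (t : muterm X) (S : fsemigroup) (f : X -> S) : option S :=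
  match t with
  | MVar x => Some (f x)
  | MOne => None
  | MMul t1 t2 => omul (mueval t1 f) (mueval t2 f)
  | MPow t a => sval (sval a) (S1 S) (mueval t f)
  end.

Lemma mueval_nat (X : Type) (t : muterm X) (S T : fsemigroup) (h : S -> T) f :
  shom h -> mueval t (h \o f) = omap h (mueval t f).
Proof.
move=> hh; elim: t => [x| |t1 IH1 t2 IH2|t IH a] //=.
  by rewrite IH1 IH2; case: (mueval t1 f) => [?|]; case: (mueval t2 f) => [?|] //=; rewrite hh.
rewrite IH; case: a => [[al Hal] _] /=.
by rewrite (Hal (S1 S) (S1 T) (omap h) (omap_mhom hh)).
Qed.

Fixpoint firstletter (X : Type) (t : muterm X) : option X :=
  match t with
  | MVar x => Some x
  | MOne => None
  | MMul t1 t2 => if firstletter t1 is Some x then Some x else firstletter t2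
  | MPow t _ => firstletter t
  end.

(** For a term containing a letter x the value lies in Omega X (the default
    f x is never used since infinite powers of elements of S stay in S). *)
Lemma mufam_nat (X : finType) (t : muterm X) (x : X) :
  forall (S T : fsemigroup) (h : S -> T), shom h -> forall f,
  h ((fun (S : fsemigroup) (f : X -> S) => odflt (f x) (mueval t f)) S f) =
  (fun (S : fsemigroup) (f : X -> S) => odflt (f x) (mueval t f)) T (h \o f).
Proof. by move=> S T h hh f /=; rewrite mueval_nat //; case: (mueval t f). Qed.

Definition mufam (X : finType) (t : muterm X) (x : X) : Omega X :=
  exist _ (fun (S : fsemigroup) (f : X -> S) => odflt (f x) (mueval t f)) (@mufam_nat X t x).

Definition muval (X : finType) (t : muterm X) : Omega1 X :=
  if firstletter t is Some x then Some (mufam t x) else None.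

Lemma wfam_nat (X : finType) (x : X) (w : seq X) :
  forall (S T : fsemigroup) (h : S -> T), shom h -> forall f,
  h ((fun (S : fsemigroup) (f : X -> S) => foldl (@fs_op S) (f x) (map f w)) S f) =
  (fun (S : fsemigroup) (f : X -> S) => foldl (@fs_op S) (f x) (map f w)) T (h \o f).
Proof.
move=> S T h hh f /=; elim: w (f x) => [|y w IH] a //=.
by rewrite IH hh.
Qed.

Definition wfam (X : finType) (x : X) (w : seq X) : Omega X :=
  exist _ (fun (S : fsemigroup) (f : X -> S) => foldl (@fs_op S) (f x) (map f w)) (@wfam_nat X x w).

Definition wval (X : finType) (w : seq X) : Omega1 X :=
  if w is x :: w' then Some (wfam x w') else None.

Fixpoint approx (X : Type) (A : Nhat -> nat -> nat) (n : nat) (t : muterm X) : seq X :=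
  match t with
  | MVar x => [:: x]
  | MOne => [::]
  | MMul t1 t2 => approx A n t1 ++ approx A n t2
  | MPow t a => flatten (nseq (A (sval a) n) (approx A n t))
  end.

Definition factorization_seq (X : Type) (A : Nhat -> nat -> nat) (t : muterm X)
  (x y : nat -> seq X) : Prop :=
  forall n, y n <> [::] /\ x n ++ y n = approx A n t.

Definition subseq_conv_muword (X : finType) (z : nat -> seq X) : Prop :=
  exists phi : nat -> nat, (forall n, phi n < phi n.+1) /\
  exists t' : muterm X, conv1 (fun n => wval (z (phi n))) (muval t').

From mathcomp Require Import all_boot.
From Stdlib Require Import Classical ClassicalEpsilon.
Set Implicit Arguments. Unset Strict Implicit. Unset Printing Implicit Defensive.

(** Induction on [t], generalised to factorizations of [Approx_(m n)(t)] for an arbitrary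
    increasing [m].  A factorization of a product cuts, along a subsequence, always inside
    the same factor.  A factorization of [v^alpha] has the shape [(v^i_n p_n, s_n v^j_n)]
    where [(p_n, s_n)] factorizes an approximation of [v]; by compactness of the profinite
    completion of N, [i_n] and [j_n] converge along a subsequence to [beta] and [gamma], and
    [v^beta], [v^gamma] are again mu-words ([v^k] for finite [k] being a product).
    Compactness itself is a diagonal argument: in a finite monoid [M] the power [g^k] only
    depends on [min(k, |M|)] and on [k] modulo [|M|!]. *)

Definition increasing (s : nat -> nat) := {homo s : m n / m < n}.

Definition eventually (P : nat -> Prop) := exists N, forall n, N <= n -> P n.

Lemma increasing_step (s : nat -> nat) : (forall n, s n < s n.+1) -> increasing s.
Proof. exact: homo_ltn ltn_trans. Qed.

Lemma increasing_comp (s r : nat -> nat) :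
  increasing s -> increasing r -> increasing (fun n => s (r n)).
Proof. by move=> hs hr m n /hr /hs. Qed.

Lemma increasing_geq (s : nat -> nat) : increasing s -> forall n, n <= s n.
Proof. by move=> hs; elim=> // n IH; exact: leq_ltn_trans IH (hs _ _ (ltnSn n)). Qed.

Lemma eventually_subseq (P : nat -> Prop) (s : nat -> nat) :
  increasing s -> eventually P -> eventually (fun n => P (s n)).
Proof.
by move=> hs [N HN]; exists N => n hn; apply: HN; exact: leq_trans hn (increasing_geq hs n).
Qed.

Lemma eventually_and (P Q : nat -> Prop) :
  eventually P -> eventually Q -> eventually (fun n => P n /\ Q n).
Proof.
move=> [N1 H1] [N2 H2]; exists (maxn N1 N2) => n.
by rewrite geq_max => /andP[h1 h2]; split; [exact: H1 | exact: H2].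
Qed.

Lemma infinitely_often_subseq (P : nat -> Prop) :
  (forall N, exists n, N <= n /\ P n) -> exists s, increasing s /\ forall n, P (s n).
Proof.
move=> /choice [g Hg].
pose s := fix s n := if n is n'.+1 then g (s n').+1 else g 0.
exists s; split; first by apply: increasing_step => n; exact: (Hg _).1.
by case=> [|n]; [exact: (Hg 0).2 | exact: (Hg _).2].
Qed.

Lemma pigeonhole b (d : nat -> nat) : (forall n, d n < b) ->
  exists s, increasing s /\ forall n, d (s n) = d (s 0).
Proof.
elim: b d => [|b IH] d hd; first by have := hd 0.
case: (classic (forall N, exists n, N <= n /\ d n = b)).
  by move=> /infinitely_often_subseq [s [hs hsb]]; exists s; split=> // n; rewrite !hsb.
move=> /not_all_ex_not [N hN].
have hlt n : d (n + N) < b.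
  have := hd (n + N); rewrite ltnS leq_eqVlt => /orP[/eqP e|//].
  by case: hN; exists (n + N); rewrite leq_addl e.
have [s [hs hsc]] := IH _ hlt.
by exists (fun n => s n + N); split=> // m n /hs; rewrite ltn_add2r.
Qed.

Lemma cat_const_subseq (T : Type) (w : seq T) (x y : nat -> seq T) :
  (forall n, x n ++ y n = w) ->
  exists s i, increasing s /\ forall n, x (s n) = take i w /\ y (s n) = drop i w.
Proof.
move=> E.
have hb n : size (x n) < (size w).+1 by rewrite -(E n) size_cat ltnS leq_addr.
have [s [hs hsc]] := pigeonhole hb.
exists s, (size (x (s 0))); split=> // n.
by rewrite -(E (s n)) take_size_cat ?drop_size_cat.
Qed.

Lemma cat_split_le (T : Type) (a b x y : seq T) : x ++ y = a ++ b -> size x <= size a ->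
  a = x ++ drop (size x) a /\ y = drop (size x) a ++ b.
Proof.
move=> e le; have ex : x = take (size x) a.
  by have := congr1 (take (size x)) e; rewrite take_size_cat // takel_cat.
have ea : a = x ++ drop (size x) a by rewrite -{1}(cat_take_drop (size x) a) -ex.
split=> //; move: e; rewrite {1}ea -catA => /(congr1 (drop (size x))).
by rewrite !drop_size_cat.
Qed.

Section Diagonal.
Variables (c : nat -> nat -> nat) (B : nat -> nat).
Hypothesis c_bounded : forall N n, c N n < B N.

Definition const_subseq (d : nat -> nat) : nat -> nat :=
  epsilon (inhabits id) (fun s => increasing s /\ forall n, d (s n) = d (s 0)).

Lemma const_subseqP b (d : nat -> nat) : (forall n, d n < b) ->
  increasing (const_subseq d) /\ forall n, d (const_subseq d n) = d (const_subseq d 0).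
Proof. by move=> hd; exact: epsilon_spec (pigeonhole hd). Qed.

Fixpoint extraction N : nat -> nat :=
  if N is N'.+1 then fun n => extraction N' (const_subseq (fun k => c N (extraction N' k)) n)
  else const_subseq (c 0).

Lemma extraction_increasing N : increasing (extraction N).
Proof.
elim: N => [|N IH]; first exact: (const_subseqP (c_bounded 0)).1.
exact: increasing_comp IH (const_subseqP (fun n => c_bounded N.+1 (extraction N n))).1.
Qed.

Lemma extraction_const N n : c N (extraction N n) = c N (extraction N 0).
Proof.
case: N => [|N]; first exact: (const_subseqP (c_bounded 0)).2.
exact: (const_subseqP (fun n => c_bounded N.+1 (extraction N n))).2.
Qed.

Lemma extraction_refines N M : N <= M -> exists r, forall n, extraction M n = extraction N (r n).
Proof.
elim: M => [|M IH]; first by rewrite leqn0 => /eqP->; exists id.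
rewrite leq_eqVlt => /orP[/eqP->|]; first by exists id.
by rewrite ltnS => /IH [r Hr]; eexists=> n /=; rewrite Hr.
Qed.

Lemma diagonal_subseq :
  exists s, increasing s /\ forall N n, N <= n -> c N (s n) = c N (s N).
Proof.
exists (fun n => extraction n n); split.
  apply: increasing_step => n /=; apply: extraction_increasing.
  exact: leq_trans (ltnSn n)
    (increasing_geq (const_subseqP (fun k => c_bounded n.+1 (extraction n k))).1 n.+1).
move=> N n /extraction_refines [r Hr].
by rewrite Hr (extraction_const N (r n)) (extraction_const N N).
Qed.

End Diagonal.

Lemma nat_conv_subseq k al s : increasing s -> nat_conv k al -> nat_conv (fun n => k (s n)) al.
Proof. by move=> hs C M g; exact: eventually_subseq hs (C M g). Qed.

Lemma mpowD (M : fmonoid) (g : M) a b : mpow g (a + b) = fm_op (mpow g a) (mpow g b).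
Proof. by elim: a => [|a IH] /=; rewrite ?fm_mul1 // IH fm_assoc. Qed.

Lemma mpow_mhom (M N : fmonoid) (h : M -> N) (g : M) k : mhom h -> h (mpow g k) = mpow (h g) k.
Proof. by move=> [h1 hM]; elim: k => [|k IH] //=; rewrite hM IH. Qed.

Lemma mpow_eventually_periodic (M : fmonoid) (g : M) :
  exists i p, 0 < p /\ i + p <= #|M| /\ mpow g (i + p) = mpow g i.
Proof.
pose f (j : 'I_#|M|.+1) := mpow g j.
have /injectivePn [a [b neq_ab eq_ab]] : ~~ injectiveb f.
  by apply/injectiveP => /leq_card; rewrite card_ord ltnn.
wlog lt_ab : a b neq_ab eq_ab / a < b.
  move=> W; case: (ltngtP a b) => [|/W|/val_inj eq]; [exact: W| |by rewrite eq eqxx in neq_ab].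
  by apply; rewrite // eq_sym.
exists a, (b - a); rewrite subn_gt0 lt_ab subnKC ?(ltnW lt_ab) //.
by split=> //; rewrite -ltnS ltn_ord.
Qed.

Lemma mpow_add_mul_period (M : fmonoid) (g : M) i p :
  mpow g (i + p) = mpow g i -> forall m k, i <= m -> mpow g (m + k * p) = mpow g m.
Proof.
move=> per m k im.
have step n : i <= n -> mpow g (n + p) = mpow g n.
  by move=> /subnK <-; rewrite -addnA mpowD per -mpowD.
elim: k => [|k IH]; first by rewrite addn0.
by rewrite mulSn addnCA addnC step ?IH // (leq_trans im (leq_addr _ _)).
Qed.

Lemma mpow_card_add_mod (M : fmonoid) (g : M) a :
  mpow g (#|M| + a %% #|M|`!) = mpow g (#|M| + a).
Proof.
have [i [p [p_gt0 [ip_le per]]]] := mpow_eventually_periodic g.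
have /dvdnP [q hq] : p %| #|M|`!.
  by apply: dvdn_fact; rewrite p_gt0 (leq_trans (leq_addl i p) ip_le).
have -> : #|M| + a = #|M| + a %% #|M|`! + a %/ #|M|`! * q * p.
  by rewrite -mulnA -hq -addnA (addnC (a %% _)) -divn_eq.
rewrite (mpow_add_mul_period per) //.
exact: leq_trans (leq_trans (leq_addr p i) ip_le) (leq_addr _ _).
Qed.

(** A representative of [k] modulo the congruence identifying exponents with equal powers
    in every monoid of size [N]. *)
Definition pow_class N k := if k < N then k else N + (k - N) %% N`!.

Lemma pow_class_lt N k : pow_class N k < N + N`!.
Proof.
rewrite /pow_class; case: ifP => [lt_kN|_]; first exact: ltn_addr.
by rewrite ltn_add2l ltn_pmod // fact_gt0.
Qed.

Lemma mpow_pow_class (M : fmonoid) (g : M) k : mpow g (pow_class #|M| k) = mpow g k.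
Proof. by rewrite /pow_class; case: ltnP => // le_Mk; rewrite mpow_card_add_mod subnKC. Qed.

Lemma Nhat_compact (k : nat -> nat) :
  exists s al, increasing s /\ nat_conv (fun n => k (s n)) al.
Proof.
have [s [hs hsc]] := diagonal_subseq (fun N n => pow_class_lt N (k n)).
pose lim (M : fmonoid) (g : M) := mpow g (k (s #|M|)).
have lim_conv (M : fmonoid) (g : M) n : #|M| <= n -> mpow g (k (s n)) = lim M g.
  by move=> le_Mn; rewrite /lim -mpow_pow_class hsc // mpow_pow_class.
have lim_nat : forall (M N : fmonoid) (h : M -> N), mhom h -> forall g, h (lim M g) = lim N (h g).
  move=> M N h hh g; rewrite -(lim_conv M g (maxn #|M| #|N|)) ?leq_maxl //.
  by rewrite mpow_mhom // lim_conv ?leq_maxr.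
by exists s, (exist _ lim lim_nat); split=> // M g; exists #|M|; exact: lim_conv.
Qed.

Definition weval (X : Type) (S : fsemigroup) (f : X -> S) (w : seq X) : option S :=
  foldr (fun a => omul (Some (f a))) None w.

Lemma weval_cat (X : Type) (S : fsemigroup) (f : X -> S) u v :
  weval f (u ++ v) = omul (weval f u) (weval f v).
Proof.
elim: u => [|a u IH] //.
by rewrite cat_cons -[LHS]/(omul _ (weval f (u ++ v))) IH omulA.
Qed.

Lemma weval_flatten_nseq (X : Type) (S : fsemigroup) (f : X -> S) w k :
  weval f (flatten (nseq k w)) = @mpow (S1 S) (weval f w) k.
Proof. by elim: k => [|k IH] //=; rewrite weval_cat IH. Qed.

Lemma weval_wval (X : finType) (S : fsemigroup) (f : X -> S) w :
  weval f w = omap (fun u : Omega X => sval u S f) (wval w).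
Proof.
have weval_from s v : omul (Some s) (weval f v) = Some (foldl (@fs_op S) s (map f v)).
  by elim: v s => [|b v IH] s //; rewrite -[weval f _]/(omul _ (weval f v)) omulA IH.
by case: w => [|a w] //; exact: weval_from.
Qed.

Definition bool_or_monoid : fmonoid := @FMonoid bool orb false orbA orFb orbF.

Definition semigroup_of (M : fmonoid) : fsemigroup :=
  @FSemigroup M (@fm_op M) (@fm_assoc M).

Lemma isSome_mhom (S : fsemigroup) : @mhom (S1 S) bool_or_monoid (@isSome S).
Proof. by split=> // [[a|] [b|]]. Qed.

Lemma odflt_one_mhom (M : fmonoid) : @mhom (S1 (semigroup_of M)) M (odflt (fm_one M)).
Proof. by split=> // [[a|] [b|]] /=; rewrite ?fm_mul1 ?fm_mulr1. Qed.

Lemma Ninf_isSome (al : Ninf) (S : fsemigroup) (o : option S) :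
  isSome (sval (sval al) (S1 S) o) = isSome o.
Proof.
case: al => [[al al_nat] al_inf] /=; case: o => [s|]; last first.
  have none_mhom : @mhom (S1 S) (S1 S) (fun _ => None) by [].
  by have := al_nat _ _ _ none_mhom None => /= <-.
rewrite (al_nat _ _ _ (isSome_mhom S)) /=.
(* Otherwise [al] would act as the exponent 0 on every finite monoid. *)
case E: (al bool_or_monoid true) => //; case: al_inf; exists 0 => M g /=.
have al_none : al (S1 (semigroup_of M)) (Some g) = None.
  have := al_nat _ _ _ (isSome_mhom (semigroup_of M)) (Some g).
  by rewrite /= E; case: (al _ _).
by have := al_nat _ _ _ (odflt_one_mhom M) (Some g); rewrite al_none.
Qed.

Section MuWords.
Variable X : finType.

Lemma mueval_isSome (t : muterm X) (S : fsemigroup) (f : X -> S) :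
  isSome (mueval t f) = isSome (firstletter t).
Proof.
elim: t => [x| |t1 IH1 t2 IH2|t IH a] //=; last by rewrite Ninf_isSome.
by move: IH1 IH2; case: (mueval t1 f) (firstletter t1) => [?|] [?|];
  case: (mueval t2 f) (firstletter t2) => [?|] [?|].
Qed.

Lemma mueval_muval (t : muterm X) (S : fsemigroup) (f : X -> S) :
  mueval t f = omap (fun u : Omega X => sval u S f) (muval t).
Proof.
rewrite /muval; have := mueval_isSome t f.
by case: (firstletter t) => [x|] /=; case: (mueval t f).
Qed.

Definition word_conv (z : nat -> seq X) (t : muterm X) :=
  forall (S : fsemigroup) (f : X -> S), eventually (fun n => weval f (z n) = mueval t f).

Lemma word_conv_cat z z1 z2 t1 t2 : (forall n, z n = z1 n ++ z2 n) ->
  word_conv z1 t1 -> word_conv z2 t2 -> word_conv z (MMul t1 t2).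
Proof.
move=> E C1 C2 S f; have [N HN] := eventually_and (C1 S f) (C2 S f).
by exists N => n /HN [e1 e2]; rewrite E weval_cat e1 e2.
Qed.

Fixpoint word_term (w : seq X) : muterm X :=
  if w is a :: w' then MMul (MVar a) (word_term w') else MOne.

Lemma word_conv_const z w : (forall n, z n = w) -> word_conv z (word_term w).
Proof.
move=> E S f; exists 0 => n _; rewrite E.
by elim: w {E} => [|a w IH] //=; rewrite -IH.
Qed.

Fixpoint pow_term (t : muterm X) k : muterm X :=
  if k is k'.+1 then MMul t (pow_term t k') else MOne.

Lemma power_term (t : muterm X) (b : Nhat) : exists T : muterm X,
  forall (S : fsemigroup) (f : X -> S), mueval T f = sval b (S1 S) (mueval t f).
Proof.
case: (classic (Nfinite b)) => [[k Hk]|b_inf]; last by exists (MPow t (exist _ b b_inf)).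
by exists (pow_term t k) => S f; rewrite Hk; elim: k {Hk} => [|k /= ->].
Qed.

Lemma word_conv_flatten_nseq u t k b (T : muterm X) : word_conv u t -> nat_conv k b ->
  (forall (S : fsemigroup) (f : X -> S), mueval T f = sval b (S1 S) (mueval t f)) ->
  word_conv (fun n => flatten (nseq (k n) (u n))) T.
Proof.
move=> Cu Ck HT S f; have [N HN] := eventually_and (Cu S f) (Ck (S1 S) (mueval t f)).
by exists N => n /HN [e1 e2]; rewrite weval_flatten_nseq e1 e2 HT.
Qed.

Definition unit_semigroup : fsemigroup :=
  @FSemigroup unit (fun _ _ => tt) (fun _ _ _ => erefl).

Lemma word_conv_conv1 z t : word_conv z t -> conv1 (fun n => wval (z n)) (muval t).
Proof.
move=> C; pose eval_at (S : fsemigroup) (f : X -> S) := omap (fun u : Omega X => sval u S f).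
have evC S f : eventually (fun n => eval_at S f (wval (z n)) = eval_at S f (muval t)).
  by have [N HN] := C S f; exists N => n /HN; rewrite weval_wval mueval_muval.
(* In the trivial semigroup the evaluation only tells whether a word is empty. *)
have [N HN] := evC unit_semigroup (fun _ => tt).
case E: (muval t) HN => [u|] HN /=; last by exists N => n /HN; case: (wval _).
split=> [|S f]; first by exists N => n /HN; case: (wval _).
have [M HM] := evC S f; exists M => n /HM; rewrite E.
by case: (wval _) => // w [e]; exists w.
Qed.

End MuWords.

Lemma pow_split (T : Type) (w : seq T) k (x y : seq T) : 0 < k -> x ++ y = flatten (nseq k w) ->
  exists i j p s, p ++ s = w /\ x = flatten (nseq i w) ++ p /\ y = s ++ flatten (nseq j w).
Proof.
elim: k x y => // k IH x y _; rewrite -[flatten _]/(w ++ flatten (nseq k w)) => E.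
case: (leqP (size x) (size w)) => [le_xw|lt_wx].
  have [ew ->] := cat_split_le E le_xw.
  by exists 0, k, x, (drop (size x) w); rewrite -ew.
have [ex ey] := cat_split_le (esym E) (ltnW lt_wx).
have : 0 < size (flatten (nseq k w)) by rewrite ey size_cat size_drop addn_gt0 subn_gt0 lt_wx.
move: (drop _ x) ex ey => r -> ey.
case: k IH ey {E} => // k IH /esym /IH [] // i [j [p [s [ps [-> ->]]]]] _.
by exists i.+1, j, p, s; rewrite catA.
Qed.

Section Factorizations.
Variables (X : finType) (A : Nhat -> nat -> nat).
Hypothesis HA : approx_ok A.

Lemma approx_word_conv (t : muterm X) m : increasing m -> word_conv (fun n => approx A (m n) t) t.
Proof.
move=> hm; elim: t => [x| |t1 IH1 t2 IH2|t IH a] S f; try by exists 0.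
  exact: word_conv_cat IH1 IH2 S f.
have conv_exp : nat_conv (fun n => A (sval a) (m n)) (sval a).
  by move=> M g; exact: eventually_subseq hm (HA.1 _ M g).
exact: (word_conv_flatten_nseq (T := MPow t a) IH conv_exp (fun _ _ => erefl)) S f.
Qed.

(** Quantifying over [m] lets the induction hypothesis be used along subsequences. *)
Definition factorizations_converge (t : muterm X) := forall m, increasing m ->
  forall x y : nat -> seq X, (forall n, x n ++ y n = approx A (m n) t) ->
  exists s, increasing s /\ exists t1 t2,
    word_conv (fun n => x (s n)) t1 /\ word_conv (fun n => y (s n)) t2.

Lemma factorizations_converge_const t :
  (forall n, approx A n t = approx A 0 t) -> factorizations_converge t.
Proof.
move=> const m _ x y E; set w := approx A 0 t.
have [s [i [hs Hs]]] := cat_const_subseq (fun n => etrans (E n) (const _) : x n ++ y n = w).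
exists s; split=> //; exists (word_term (take i w)), (word_term (drop i w)).
by split; apply: word_conv_const => n; case: (Hs n).
Qed.

Lemma factorizations_converge_mul t1 t2 : factorizations_converge t1 ->
  factorizations_converge t2 -> factorizations_converge (MMul t1 t2).
Proof.
move=> IH1 IH2 m hm x y E.
pose short n := size (x n) <= size (approx A (m n) t1).
have [s [hs hsc]] := @pigeonhole 2 (fun n => short n) (fun n => leq_b1 _).
have {}hsc n : short (s n) = short (s 0).
  by move: (hsc n); case: (short (s n)); case: (short (s 0)).
have hms := increasing_comp hm hs.
case: (boolP (short (s 0))) => h0.
  have spl n := cat_split_le (E (s n)) (etrans (hsc n) h0).
  pose r n := drop (size (x (s n))) (approx A (m (s n)) t1).
  have [s2 [hs2 [p [q [Cp Cq]]]]] := IH1 _ hms _ r (fun n => esym (spl n).1).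
  exists (fun n => s (s2 n)); split; first exact: increasing_comp.
  exists p, (MMul q t2); split=> //.
  exact: word_conv_cat (fun n => (spl (s2 n)).2) Cq (approx_word_conv t2 (increasing_comp hms hs2)).
have long n : size (approx A (m (s n)) t1) <= size (x (s n)).
  by apply: ltnW; rewrite ltnNge; change (~~ short (s n)); rewrite hsc.
have spl n := cat_split_le (esym (E (s n))) (long n).
pose r n := drop (size (approx A (m (s n)) t1)) (x (s n)).
have [s2 [hs2 [p [q [Cp Cq]]]]] := IH2 _ hms r _ (fun n => esym (spl n).2).
exists (fun n => s (s2 n)); split; first exact: increasing_comp.
exists (MMul t1 p), q; split=> //.
exact: word_conv_cat (fun n => (spl (s2 n)).1) (approx_word_conv t1 (increasing_comp hms hs2)) Cp.
Qed.

Lemma factorizations_converge_pow t a :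
  factorizations_converge t -> factorizations_converge (MPow t a).
Proof.
move=> IH m hm x y E.
have hS : increasing S by move=> i j; rewrite ltnS.
(* Shifting by one makes the exponents positive, as [pow_split] needs. *)
have exp_gt0 n : 0 < A (sval a) (m n.+1).
  have hA := increasing_step (HA.2.2 _ (svalP a)).
  exact: leq_trans (ltn0Sn n) (leq_trans (increasing_geq hm _) (increasing_geq hA _)).
have [I HI] := @choice _ _ _ (fun n => pow_split (w := approx A (m n.+1) t) (exp_gt0 n) (E n.+1)).
have [J HJ] := @choice _ _ _ HI; have [P HP] := @choice _ _ _ HJ; have [Q HQ] := @choice _ _ _ HP.
have [s1 [b [hs1 Cb]]] := Nhat_compact I.
have [s2 [c [hs2 Cc]]] := Nhat_compact (fun n => J (s1 n)).
have hu := increasing_comp hs1 hs2.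
have [s3 [hs3 [tp [tq [Cp Cq]]]]] :=
  IH _ (increasing_comp hm (increasing_comp hS hu)) _ _ (fun n => (HQ (s1 (s2 n))).1).
have hv := increasing_comp hu hs3.
have Cw := approx_word_conv t (increasing_comp hm (increasing_comp hS hv)).
have [TB HTB] := power_term t b; have [TC HTC] := power_term t c.
exists (fun n => (s1 (s2 (s3 n))).+1); split; first exact: increasing_comp hS hv.
exists (MMul TB tp), (MMul tq TC); split.
  apply: word_conv_cat (fun n => (HQ _).2.1) _ Cp.
  exact: word_conv_flatten_nseq Cw (nat_conv_subseq (increasing_comp hs2 hs3) Cb) HTB.
apply: word_conv_cat (fun n => (HQ _).2.2) Cq _.
exact: word_conv_flatten_nseq Cw (nat_conv_subseq hs3 Cc) HTC.
Qed.

Lemma factorizations_converge_all t : factorizations_converge t.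
Proof.
elim: t => [a| |t1 IH1 t2 IH2|t IH a].
- exact: factorizations_converge_const.
- exact: factorizations_converge_const.
- exact: factorizations_converge_mul.
- exact: factorizations_converge_pow.
Qed.

End Factorizations.

Theorem lemma2p1 (X : finType) (A : Nhat -> nat -> nat) (HA : approx_ok A)
  (t : muterm X) (x y : nat -> seq X) (Hfs : factorization_seq A t x y) :
  subseq_conv_muword x /\ subseq_conv_muword y.
Proof.
have [s [hs [t1 [t2 [Cx Cy]]]]] :=
  factorizations_converge_all HA (m := id) (fun _ _ lt => lt) (fun n => (Hfs n).2).
by split; exists s; (split; first by move=> n; exact: hs); [exists t1 | exists t2];
  exact: word_conv_conv1.
Qed.
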